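(* Let $A=-3(9s^8+48s^7t+64s^6t^2+48s^4t^4+128s^3t^5+16t^8)$ and $B=-2(3s^4+8s^3t+8t^4)(9s^8+48s^7t+64s^6t^2+48s^4t^4+128s^3t^5-8t^8)$. The elliptic surface $X\to\mathbb{P}^1$ defined by $y^2=x^3+Ax+B$ is a K3 surface whose singular fibres are exactly six semi-stable fibres, of Kodaira types $I_1,I_1,I_1,I_2,I_3,I_{16}$.
   Context: For homogeneous polynomials $A,B\in\mathbb{Q}[s,t]$ of degrees $8$ and $12$, the elliptic surface defined by $y^2=x^3+Ax+B$ is the minimal smooth relatively minimal elliptic surface over $\mathbb{P}^1$ (coordinates $(s:t)$) with zero section, obtained as the minimal resolution of this Weierstrass model; its singular fibres lie over the zeros of the discriminant $\Delta=-16(4A^3+27B^2)$. $I_n$ denotes Kodaira's fibre type (a nodal rational curve for $n=1$, a cycle of $n$ smooth rational curves for $n\ge2$); such fibres are called semi-stable. The surface is K3 iff its Euler number (the sum of Euler numbers of the singular fibres, $n$ for $I_n$) equals $24$. *)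

From mathcomp Require Import all_boot all_order all_algebra all_field.
Set Implicit Arguments. Unset Strict Implicit. Unset Printing Implicit Defensive.
Import Order.TTheory GRing.Theory Num.Theory.
Local Open Scope ring_scope.

(* Points of P^1 over the algebraic closure (algC) in coordinates (s:t):
   [Some a] is the point (a:1), [None] is the point at infinity (1:0). *)
Definition P1pt := option algC.

(* A binary form F(s,t) of degree d is represented by its dehomogenisation
   f(s) = F(s,1).  [ordF d f p] is the order of vanishing of F at p:
   at (a:1) it is the multiplicity of a as a root of f; at (1:0) it is
   d - deg f (the power of t dividing F). *)
Definition ordF (d : nat) (f : {poly algC}) (p : P1pt) : nat :=
  match p with
  | Some a => mup a f
  | None => (d - (size f).-1)%N
  end.

Definition discr (A B : {poly algC}) : {poly algC} :=
  - 16 * (4 * A ^+ 3 + 27 * B ^+ 2).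

Inductive kodaira :=
  | KI of nat     (* I_n, n >= 0 (I_0 = smooth fibre) *)
  | KIs of nat
  | KII | KIII | KIV | KIVs | KIIIs | KIIs
  | KNonMinimal.

(* Kodaira type of the fibre over p of the (minimal resolution of the)
   Weierstrass model y^2 = x^3 + A x + B with deg A = 8, deg B = 12
   forms, via the standard (Tate/Neron) valuation table in char. 0. *)
Definition fibre_type (A B : {poly algC}) (p : P1pt) : kodaira :=
  let a := ordF 8 A p in
  let b := ordF 12 B p in
  let dl := ordF 24 (discr A B) p in
  if (4 <= a)%N && (6 <= b)%N then KNonMinimal
  else if dl == 0%N then KI 0
  else if (a == 0%N) || (b == 0%N) then KI dl
  else if b == 1%N then KII
  else if a == 1%N then KIII
  else if b == 2%N then KIV
  else if (a == 2%N) || (b == 3%N) then KIs (dl - 6)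
  else if b == 4%N then KIVs
  else if a == 3%N then KIIIs
  else KIIs.

Definition euler_fibre (k : kodaira) : nat :=
  match k with
  | KI n => n
  | KIs n => n + 6
  | KII => 2 | KIII => 3 | KIV => 4
  | KIVs => 8 | KIIIs => 9 | KIIs => 10
  | KNonMinimal => 0
  end%N.

Definition singular_fibre (A B : {poly algC}) (p : P1pt) : Prop :=
  fibre_type A B p <> KI 0.

(* K3 criterion: the Euler numbers of the singular fibres sum to 24. *)
Definition is_K3 (A B : {poly algC}) : Prop :=
  exists ps : seq P1pt, uniq ps /\
    (forall p, singular_fibre A B p -> p \in ps) /\
    (\sum_(p <- ps) euler_fibre (fibre_type A B p) = 24)%N.

(* Over P^1 the discriminant factors as
     Delta = 12^6 t^16 s^3 (s + 2t)^2 c(s,t),  c = 9s^3 + 12s^2 t - 20s t^2 + 32t^3,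
   and A = -48 t^8 - 3 s^3 (s + 2t)^2 c(s,t) = -48 t^8 - 3 Delta / (12^6 t^16).
   Hence A does not vanish where Delta does (at t = 0 because deg A(s,1) = 8), so
   every singular fibre is of type I_n with n the order of Delta.  The cubic c is
   separable (a Bezout identity with c') and c(0,1), c(-2,1) are non-zero, so the
   fibres are I_1 at the three roots of c, I_2 at s = -2t, I_3 at s = 0 and I_16 at
   t = 0; their Euler numbers add up to 24. *)

From mathcomp Require Import all_boot all_order all_algebra all_field.
From mathcomp Require Import ring.
Set Implicit Arguments. Unset Strict Implicit. Unset Printing Implicit Defensive.
Import GRing.Theory Num.Theory.
Local Open Scope ring_scope.

Lemma root_discr (A B : {poly algC}) x : root A x -> root B x -> root (discr A B) x.
Proof.
by rewrite /root /discr !(hornerM, hornerD, horner_exp) => /eqP-> /eqP->; apply/eqP; ring.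
Qed.

Lemma fibre_type_semistable (A B : {poly algC}) p :
  (ordF 8 A p == 0%N) || (ordF 12 B p == 0%N) ->
  fibre_type A B p = KI (ordF 24 (discr A B) p).
Proof.
rewrite /fibre_type => unit_AB.
have -> : ((4 <= ordF 8 A p) && (6 <= ordF 12 B p))%N = false.
  by case/orP: unit_AB => /eqP->; rewrite ?andbF.
by rewrite unit_AB; case: eqP => // ->.
Qed.

Definition weierA : {poly algC} :=
  -3 * (9 * 'X^8 + 48 * 'X^7 + 64 * 'X^6 + 48 * 'X^4 + 128 * 'X^3 + 16).
Definition weierB : {poly algC} :=
  -2 * (3 * 'X^4 + 8 * 'X^3 + 8)
     * (9 * 'X^8 + 48 * 'X^7 + 64 * 'X^6 + 48 * 'X^4 + 128 * 'X^3 - 8).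

Definition cubic : {poly algC} := 9 * 'X^3 + 12 * 'X^2 - 20 * 'X + 32.
Definition reduced_discr : {poly algC} := 'X^3 * ('X + 2) ^+ 2 * cubic.

Lemma discr_weierE : discr weierA weierB = 12 ^+ 6 * reduced_discr.
Proof. by rewrite /discr /weierA /weierB /reduced_discr /cubic; ring. Qed.

Lemma weierAE : weierA = -48 - 3 * reduced_discr.
Proof. by rewrite /weierA /reduced_discr /cubic; ring. Qed.

Lemma weierA_at_discr_root x :
  root (discr weierA weierB) x -> weierA.[x] = -48.
Proof.
rewrite discr_weierE /root hornerM mulf_eq0 => /orP[|/eqP Dx].
  by rewrite -polyC_natr -polyC_exp hornerC expf_eq0 pnatr_eq0.
by rewrite weierAE hornerD !hornerN hornerM Dx mulr0 oppr0 addr0 -polyC_natr hornerC.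
Qed.

Lemma horner_cubic x : cubic.[x] = 9 * x ^+ 3 + 12 * x ^+ 2 - 20 * x + 32.
Proof.
by rewrite /cubic -!polyC_natr !(hornerD, hornerN, hornerM, horner_exp, hornerX, hornerC).
Qed.

Lemma deriv_cubic : cubic^`() = 27 * 'X^2 + 24 * 'X - 20.
Proof. by rewrite /cubic !derivE; ring. Qed.

Lemma size_cubic : size cubic = 4%N.
Proof.
have -> : cubic = ((9%:P * 'X + 12%:P) * 'X + (-20)%:P) * 'X + 32%:P.
  by rewrite /cubic polyCN !polyC_natr; ring.
rewrite !size_MXaddC size_polyC.
by rewrite polyC_eq0 oppr_eq0 !pnatr_eq0 /= !andbF.
Qed.

Lemma separable_cubic : separable_poly cubic.
Proof.
rewrite unlock; apply/Bezout_coprimepP.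
exists (13662 + 4617 * 'X, 864 - 5238 * 'X - 1539 * 'X^2) => /=.
have -> : (13662 + 4617 * 'X) * cubic + (864 - 5238 * 'X - 1539 * 'X^2) * cubic^`()
          = (648 ^+ 2)%:P :> {poly algC}.
  by rewrite deriv_cubic /cubic polyC_exp polyC_natr; ring.
by rewrite polyC_eqp1 expf_neq0 // pnatr_eq0.
Qed.

Lemma cubic_splits :
  exists lc r1 r2 r3 : algC, cubic = lc *: \prod_(z <- [:: r1; r2; r3]) ('X - z%:P).
Proof.
have [rs cubicE] := closed_field_poly_normal cubic.
have lc_neq0 : lead_coef cubic != 0 by rewrite lead_coef_eq0 -size_poly_eq0 size_cubic.
have : size rs = 3%N.
  by have := size_cubic; rewrite cubicE size_scale // size_prod_XsubC => -[].
case: rs cubicE => [|r1 [|r2 [|r3 [|]]]] //= cubicE _.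
by exists (lead_coef cubic), r1, r2, r3.
Qed.

Section CubicRoots.

Variables lc r1 r2 r3 : algC.
Hypothesis cubicE : cubic = lc *: \prod_(z <- [:: r1; r2; r3]) ('X - z%:P).

Definition sing_roots := [:: r1; r2; r3] ++ [:: -2; 0].
Definition discr_roots := sing_roots ++ [:: -2; 0; 0].
Definition fibre_pts := rcons [seq Some z | z <- sing_roots] None.

Lemma cubic_lc_neq0 : lc != 0.
Proof.
have : cubic != 0 by rewrite -size_poly_eq0 size_cubic.
by rewrite cubicE; apply: contraNneq => ->; rewrite scale0r.
Qed.

Lemma root_cubic z : root cubic z = (z \in [:: r1; r2; r3]).
Proof. by rewrite cubicE rootZ ?cubic_lc_neq0 // root_prod_XsubC. Qed.

Lemma cubic_root_neq z : z \in [:: r1; r2; r3] -> (z != -2) && (z != 0).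
Proof.
rewrite -root_cubic /root; apply: contraTT; rewrite negb_and !negbK => /orP[] /eqP->.
  have -> : cubic.[-2] = 48 by rewrite horner_cubic; ring.
  by rewrite pnatr_eq0.
have -> : cubic.[0] = 32 by rewrite horner_cubic; ring.
by rewrite pnatr_eq0.
Qed.

Lemma uniq_sing_roots : uniq sing_roots.
Proof.
rewrite cat_uniq; apply/and3P; split.
- rewrite -separable_prod_XsubC -(eqp_separable (eqp_scale _ cubic_lc_neq0)) -cubicE.
  exact: separable_cubic.
- apply/hasPn => z zin; apply/negP => /cubic_root_neq.
  by move: zin; rewrite !inE => /orP[] /eqP->; rewrite eqxx ?andbF.
- by rewrite /= inE oppr_eq0 pnatr_eq0.
Qed.

Lemma count_discr_roots x :
  count_mem x discr_roots = ((x \in sing_roots) + (x == (-2)%R) + (x == 0%R) * 2)%N.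
Proof.
rewrite count_cat count_uniq_mem ?uniq_sing_roots //= !(eq_sym _ x).
ring.
Qed.

Lemma mem_discr_roots x : (x \in discr_roots) = (x \in sing_roots).
Proof. by rewrite mem_cat orb_idr // !inE => /or3P[]->; rewrite ?orbT. Qed.

Lemma discr_weier_prod :
  discr weierA weierB = (12 ^+ 6 * lc) *: \prod_(z <- discr_roots) ('X - z%:P).
Proof.
rewrite discr_weierE /reduced_discr cubicE !big_cons big_nil -!mul_polyC.
by rewrite polyCM polyC_exp polyCN polyC0 !polyC_natr; ring.
Qed.

Lemma discr_lc_neq0 : 12 ^+ 6 * lc != 0.
Proof. by rewrite mulf_neq0 ?cubic_lc_neq0 // expf_neq0 // pnatr_eq0. Qed.

Lemma size_discr_weier : size (discr weierA weierB) = 9%N.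
Proof. by rewrite discr_weier_prod size_scale ?size_prod_XsubC // discr_lc_neq0. Qed.

Lemma size_weierA : size weierA = 9%N.
Proof.
have size_rd : size reduced_discr = 9%N.
  rewrite -size_discr_weier discr_weierE -polyC_natr -polyC_exp size_Cmul //.
  by rewrite expf_neq0 // pnatr_eq0.
have size_3rd : size (3 * reduced_discr) = 9%N.
  by rewrite -polyC_natr size_Cmul ?pnatr_eq0.
rewrite weierAE addrC size_polyDl !size_polyN size_3rd //.
by rewrite -polyC_natr size_polyC pnatr_eq0.
Qed.

Lemma ordF_discr_weier x :
  ordF 24 (discr weierA weierB) (Some x) = count_mem x discr_roots.
Proof.
by rewrite /= discr_weier_prod -mul_polyC mupMr ?mu_prod_XsubC // rootC discr_lc_neq0.
Qed.

Lemma ordF_discr_weier_inf : ordF 24 (discr weierA weierB) None = 16%N.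
Proof. by rewrite /= size_discr_weier. Qed.

Lemma fibre_type_weier p :
  fibre_type weierA weierB p = KI (ordF 24 (discr weierA weierB) p).
Proof.
apply: fibre_type_semistable; case: p => [x|] /=; last by rewrite size_weierA.
have [Ax|/mupNroot->] := boolP (root weierA x); last by [].
rewrite orbC mupNroot //; apply/negP => Bx.
have := weierA_at_discr_root (root_discr Ax Bx); move/eqP: Ax => -> /eqP.
by rewrite eq_sym oppr_eq0 pnatr_eq0.
Qed.

Lemma uniq_fibre_pts : uniq fibre_pts.
Proof.
rewrite rcons_uniq (map_inj_uniq Some_inj) uniq_sing_roots andbT.
by apply/mapP => -[].
Qed.

Lemma singular_fibre_weier p :
  singular_fibre weierA weierB p -> p \in fibre_pts.
Proof.
rewrite mem_rcons in_cons; case: p => [x|] //.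
rewrite /singular_fibre fibre_type_weier ordF_discr_weier (mem_map Some_inj) => sing_x.
apply/orP; right; rewrite -mem_discr_roots; apply/negPn/negP => /count_memPn x_reg.
by apply: sing_x; rewrite x_reg.
Qed.

Lemma fibre_types_weier :
  [seq fibre_type weierA weierB p | p <- fibre_pts]
  = [:: KI 1; KI 1; KI 1; KI 2; KI 3; KI 16].
Proof.
have count_cubic_root z : z \in [:: r1; r2; r3] -> count_mem z discr_roots = 1%N.
  move=> zr; have /andP[/negbTE z_m2 /negbTE z_0] := cubic_root_neq zr.
  by rewrite count_discr_roots mem_cat zr z_m2 z_0.
have m2_neq0 : ((-2 : algC) == 0) = false by rewrite oppr_eq0 pnatr_eq0.
rewrite /fibre_pts map_rcons /= !fibre_type_weier !ordF_discr_weier ordF_discr_weier_inf.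
rewrite (count_discr_roots (-2)) (count_discr_roots 0) !mem_cat !inE !eqxx !orbT.
rewrite m2_neq0 eq_sym m2_neq0 !count_cubic_root ?inE ?eqxx ?orbT //.
Qed.

End CubicRoots.

Theorem mainTheorem4 :
  (* A(s,1) and B(s,1) *)
  let A : {poly algC} :=
    -3 * (9 * 'X^8 + 48 * 'X^7 + 64 * 'X^6 + 48 * 'X^4 + 128 * 'X^3 + 16) in
  let B : {poly algC} :=
    -2 * (3 * 'X^4 + 8 * 'X^3 + 8)
       * (9 * 'X^8 + 48 * 'X^7 + 64 * 'X^6 + 48 * 'X^4 + 128 * 'X^3 - 8) in
  [/\ discr A B != 0,
      (forall p, fibre_type A B p <> KNonMinimal),
      is_K3 A B &
      exists p1 p2 p3 p4 p5 p6 : P1pt,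
        [/\ uniq [:: p1; p2; p3; p4; p5; p6],
            [/\ fibre_type A B p1 = KI 1, fibre_type A B p2 = KI 1,
                fibre_type A B p3 = KI 1, fibre_type A B p4 = KI 2 &
                fibre_type A B p5 = KI 3 /\ fibre_type A B p6 = KI 16] &
            forall p, singular_fibre A B p -> p \in [:: p1; p2; p3; p4; p5; p6]]].
Proof.
rewrite -/weierA -/weierB.
have [lc [r1 [r2 [r3 cubicE]]]] := cubic_splits.
have [= ft1 ft2 ft3 ft4 ft5 ft6] := fibre_types_weier cubicE.
split.
- by rewrite -size_poly_eq0 (size_discr_weier cubicE).
- by move=> p; rewrite (fibre_type_weier cubicE).
- exists (fibre_pts r1 r2 r3); split; first exact: uniq_fibre_pts cubicE.
  split; first exact: singular_fibre_weier cubicE.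
  by rewrite -(big_map _ xpredT euler_fibre) (fibre_types_weier cubicE) !big_cons big_nil.
- exists (Some r1), (Some r2), (Some r3), (Some (-2)), (Some 0), None.
  by split; [exact: uniq_fibre_pts cubicE | | exact: singular_fibre_weier cubicE].
Qed.
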